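(* For $1\le i\le n$ let $f_i:\mathbb{R}\to\mathbb{R}$ be a convex function that is bounded below, let $a_1,\dots,a_n\ge 0$, and define $g:\mathbb{Z}^n\to\mathbb{R}$ by $g(\vec y)=\sum_{i=1}^n a_if_i(y_i)$. Then $(\mathbb{Z}^n,g)$ is an Ameso($0$) pair.
   Context: Floors and ceilings of vectors are taken componentwise. A set $D^n\subseteq\mathbb{Z}^n$ is an Ameso set if $\lceil(\vec x+\vec y)/2\rceil,\lfloor(\vec x+\vec y)/2\rfloor\in D^n$ for all $\vec x,\vec y\in D^n$. For $C\ge 0$, $(D^n,f)$ is an Ameso($C$) pair if $D^n$ is an Ameso set, $f:D^n\to\mathbb{R}$ is bounded below, and $f(\vec x)+f(\vec y)+C\ge f(\lceil(\vec x+\vec y)/2\rceil)+f(\lfloor(\vec x+\vec y)/2\rfloor)$ for all $\vec x,\vec y\in D^n$. *)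

From mathcomp Require Import all_boot all_order all_algebra.
From mathcomp Require Import reals.
Set Implicit Arguments. Unset Strict Implicit. Unset Printing Implicit Defensive.
Import Order.TTheory GRing.Theory Num.Theory.
Local Open Scope ring_scope.

Definition zvec (n : nat) := {ffun 'I_n -> int}.

(* floor and ceiling of (x+y)/2 for integers, using Euclidean division by 2
   (the remainder is nonnegative, so (m %/ 2)%Z is the floor of m/2). *)
Definition floor_half (m : int) : int := (m %/ 2)%Z.
Definition ceil_half (m : int) : int := - ((- m) %/ 2)%Z.

Definition mid_floor n (x y : zvec n) : zvec n := [ffun i => floor_half (x i + y i)].
Definition mid_ceil n (x y : zvec n) : zvec n := [ffun i => ceil_half (x i + y i)].

Definition ameso_set n (D : zvec n -> Prop) : Prop :=
  forall x y, D x -> D y -> D (mid_ceil x y) /\ D (mid_floor x y).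

Definition ameso_pair (R : realType) n (D : zvec n -> Prop) (f : zvec n -> R)
  (C : R) : Prop :=
  ameso_set D /\
  (exists m : R, forall x, D x -> m <= f x) /\
  (forall x y, D x -> D y ->
     f (mid_ceil x y) + f (mid_floor x y) <= f x + f y + C).

Definition convex_fun (R : realType) (f : R -> R) : Prop :=
  forall (x y t : R), 0 <= t -> t <= 1 ->
    f (t * x + (1 - t) * y) <= t * f x + (1 - t) * f y.

Definition bounded_below (R : realType) (f : R -> R) : Prop :=
  exists m : R, forall x, m <= f x.

(* The function is separable with nonnegative weights, so the Ameso(0)
   inequality reduces to one coordinate: for integers x <= y, the ceiling and
   floor of (x + y)/2 are two integers in [x, y] with the same sum x + y, and a
   convex function can only decrease when such a pair of points is moved
   inward. *)

From mathcomp Require Import all_boot all_order all_algebra.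
From mathcomp Require Import boolp reals zify ring lra.
Import Order.TTheory GRing.Theory Num.Theory.
Local Open Scope ring_scope.

Lemma floor_half_bounds (m : int) : floor_half m * 2 <= m <= floor_half m * 2 + 1.
Proof.
rewrite /floor_half {2 3}(divz_eq m 2).
have := modz_ge0 m (isT : 2 != 0 :> int); have := ltz_pmod m (isT : 0 < 2 :> int).
lia.
Qed.

Lemma ceil_halfD_floor_half (m : int) : ceil_half m + floor_half m = m.
Proof.
have := floor_half_bounds m; have := floor_half_bounds (- m).
rewrite /ceil_half /floor_half; lia.
Qed.

Lemma ceil_half_mid (x y : int) : x <= y -> x <= ceil_half (x + y) <= y.
Proof.
have := floor_half_bounds (- (x + y)); rewrite /ceil_half /floor_half; lia.
Qed.

Lemma convex_fun_inner_le_outer (R : realType) (g : R -> R) (x y c : R) :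
  convex_fun g -> x <= c <= y -> g c + g (x + y - c) <= g x + g y.
Proof.
move=> gconv /andP[xc cy].
have [exy|xy] := eqVneq x y.
  subst y; have -> : c = x by lra.
  by rewrite addrK.
have y_gt_x : 0 < y - x by rewrite subr_gt0 lt_neqAle xy (le_trans xc cy).
pose t := (y - c) / (y - x).
have t_ge0 : 0 <= t by apply: divr_ge0; lra.
have t_le1 : t <= 1 by rewrite ler_pdivrMr // mul1r; lra.
have -> : c = t * x + (1 - t) * y by rewrite /t; field; lra.
have -> : x + y - (t * x + (1 - t) * y) = (1 - t) * x + (1 - (1 - t)) * y.
  by ring.
have := gconv x y t t_ge0 t_le1.
have := gconv x y (1 - t) ltac:(lra) ltac:(lra).
lra.
Qed.

Lemma convex_fun_mid_int (R : realType) (g : R -> R) (x y : int) : convex_fun g ->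
  g (ceil_half (x + y))%:~R + g (floor_half (x + y))%:~R <= g x%:~R + g y%:~R.
Proof.
move=> gconv; wlog xy : x y / x <= y.
  move=> base; have [|/ltW yx] := lerP x y; first exact: base.
  by rewrite [x + y]addrC [g x%:~R + _]addrC; apply: base.
have -> : floor_half (x + y) = x + y - ceil_half (x + y).
  by rewrite -{2}(ceil_halfD_floor_half (x + y)) addrAC subrr add0r.
rewrite intrB intrD; apply: convex_fun_inner_le_outer => //.
by rewrite !ler_int ceil_half_mid.
Qed.

Lemma weighted_sum_bounded_below {R : numDomainType} {I : finType} {T : Type}
    {a : I -> R} {F : I -> T -> R} :
  (forall i, 0 <= a i) -> (forall i, exists m, forall t, m <= F i t) ->
  exists m, forall t, m <= \sum_i a i * F i t.
Proof.
move=> a_ge0 /choice[m mP]; exists (\sum_i a i * m i) => t.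
by apply: ler_sum => i _; rewrite ler_wpM2l.
Qed.

Theorem mainTheorem8 (R : realType) (n : nat) (f : 'I_n -> R -> R) (a : 'I_n -> R)
  (hconv : forall i, convex_fun (f i))
  (hbdd : forall i, bounded_below (f i))
  (ha : forall i, 0 <= a i) :
  ameso_pair (fun _ : zvec n => True)
    (fun y : zvec n => \sum_(i < n) a i * f i ((y i)%:~R)) 0.
Proof.
split=> //; split.
  have bdd i : exists m, forall y : zvec n, m <= f i (y i)%:~R.
    by have [m mP] := hbdd i; exists m.
  by have [m mP] := weighted_sum_bounded_below ha bdd; exists m.
move=> x y _ _; rewrite addr0 -!big_split /=.
apply: ler_sum => i _; rewrite !ffunE -!mulrDr ler_wpM2l //.
exact: convex_fun_mid_int.
Qed.
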